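(* The group of units of a cancellative strongly hyperbolic monoid is a (word) hyperbolic group.
   Context: Directed graphs may have loops and multiple edges; $d(u,v)$ is the length of a shortest directed path from $u$ to $v$ ($\infty$ if none). Out-ball $\overrightarrow{\mathcal{B}}_r(x)=\{y : d(x,y)\le r\}$, in-ball $\overleftarrow{\mathcal{B}}_r(x)=\{y : d(y,x)\le r\}$, extended to sets by union. A path $[x_0,\dots,x_n]$ is a geodesic if $n=d(x_0,x_n)$. A directed geodesic triangle is an ordered triple $(p,q,r)$ of geodesics with the end of $p$ equal to the start of $q$ and $p\circ q$ having the same start and end as $r$; it is $\delta$-thin if every vertex of $r$ lies in $\overrightarrow{\mathcal{B}}_\delta(p)\cup\overleftarrow{\mathcal{B}}_\delta(q)$, every vertex of $p$ lies in $\overrightarrow{\mathcal{B}}_\delta(r)\cup\overleftarrow{\mathcal{B}}_\delta(q)$, and every vertex of $q$ lies in $\overrightarrow{\mathcal{B}}_\delta(p)\cup\overleftarrow{\mathcal{B}}_\delta(r)$. A directed graph is strongly $\delta$-hyperbolic if all its directed geodesic triangles are $\delta$-thin. A monoid is strongly hyperbolic if its right Cayley graph (vertex set the monoid, edge $m\to n$ for each generator $a$ with $ma=n$) w.r.t. some finite generating set is strongly $\delta$-hyperbolic for some $\delta\ge0$. The group of units is the set of $x$ for which some $y$ satisfies $xy=yx=1$. *)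

From Stdlib Require Import List Arith.
Import ListNotations.
Set Implicit Arguments.

(* ---------- Directed graphs (vertex type V, edge relation E) ----------
   Multiple edges do not affect distances, paths-as-vertex-sequences,
   geodesics or thinness, so a graph is represented by its edge relation. *)
Section Graphs.
Variables (V : Type) (E : V -> V -> Prop).

(* the path [x; p_1; ...; p_n] is represented by its start x and tail p;
   its length is length p and it ends at last p x *)
Fixpoint is_path (x : V) (p : list V) : Prop :=
  match p with
  | [] => True
  | y :: p' => E x y /\ is_path y p'
  end.

Definition path_end (x : V) (p : list V) : V := last p x.

Definition walk (x y : V) (n : nat) : Prop :=
  exists p, length p = n /\ is_path x p /\ path_end x p = y.

Definition dist_le (x y : V) (r : nat) : Prop :=
  exists n, n <= r /\ walk x y n.

Definition geodesic (x : V) (p : list V) : Prop :=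
  is_path x p /\ forall n, walk x (path_end x p) n -> length p <= n.

Definition in_out_ball (d : nat) (x : V) (p : list V) (y : V) : Prop :=
  exists s, In s (x :: p) /\ dist_le s y d.

Definition in_in_ball (d : nat) (x : V) (p : list V) (y : V) : Prop :=
  exists s, In s (x :: p) /\ dist_le y s d.

Definition geodesic_triangle (xp : V) (p : list V) (xq : V) (q : list V)
    (xr : V) (r : list V) : Prop :=
  geodesic xp p /\ geodesic xq q /\ geodesic xr r /\
  path_end xp p = xq /\ xr = xp /\ path_end xr r = path_end xq q.

Definition thin_triangle (d : nat) (xp : V) (p : list V) (xq : V) (q : list V)
    (xr : V) (r : list V) : Prop :=
  (forall v, In v (xr :: r) -> in_out_ball d xp p v \/ in_in_ball d xq q v) /\
  (forall v, In v (xp :: p) -> in_out_ball d xr r v \/ in_in_ball d xq q v) /\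
  (forall v, In v (xq :: q) -> in_out_ball d xp p v \/ in_in_ball d xr r v).

Definition strongly_hyperbolic_graph_delta (d : nat) : Prop :=
  forall xp p xq q xr r, geodesic_triangle xp p xq q xr r ->
    thin_triangle d xp p xq q xr r.

(* distances are integers, so a real delta >= 0 may be taken in nat *)
Definition strongly_hyperbolic_graph : Prop :=
  exists d : nat, strongly_hyperbolic_graph_delta d.

End Graphs.

Section Monoids.
Variables (M : Type) (mul : M -> M -> M) (one : M).

Definition is_monoid : Prop :=
  (forall x y z, mul x (mul y z) = mul (mul x y) z) /\
  (forall x, mul one x = x) /\ (forall x, mul x one = x).

Definition cancellative : Prop :=
  (forall a x y, mul a x = mul a y -> x = y) /\
  (forall a x y, mul x a = mul y a -> x = y).

Definition word_prod (l : list M) : M := fold_right mul one l.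

Definition generates (gens : list M) : Prop :=
  forall m, exists l, (forall a, In a l -> In a gens) /\ m = word_prod l.

Definition cayley_edge (gens : list M) (m n : M) : Prop :=
  exists a, In a gens /\ mul m a = n.

Definition strongly_hyperbolic_monoid : Prop :=
  exists gens : list M, generates gens /\
    strongly_hyperbolic_graph (cayley_edge gens).

Definition is_unit (x : M) : Prop := exists y, mul x y = one /\ mul y x = one.

Definition units : Type := { x : M | is_unit x }.

Definition units_cayley_edge (S : list M) (u v : units) : Prop :=
  exists s, In s S /\ mul (proj1_sig u) s = proj1_sig v.

(* The group of units is word hyperbolic: it has a finite symmetric
   generating set S whose Cayley graph (a symmetric directed graph, i.e. the
   undirected Cayley graph) has uniformly thin geodesic triangles. *)
Definition units_word_hyperbolic : Prop :=
  exists S : list M,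
    (forall s, In s S -> is_unit s) /\
    (forall s, In s S -> exists t, In t S /\ mul s t = one /\ mul t s = one) /\
    (forall u : units, exists l, (forall a, In a l -> In a S) /\
                                 proj1_sig u = word_prod l) /\
    strongly_hyperbolic_graph (units_cayley_edge S).

End Monoids.

(* Let the finite set A generate M with a strongly d-hyperbolic right Cayley graph, and
   let S consist of the units of A and their inverses.  By cancellativity a product is a
   unit only if its factors are, so S generates the group of units, and an A-path ending
   at a unit runs through units along edges labelled by units.  Hence, on the units, the
   S-distance is at most the A-distance, which is at most K times the S-distance, K being
   a bound on the A-length of the elements of S.
   Halving an S-path of length L and using thin A-triangles puts every vertex of an
   A-geodesic within d log2 L + K of that path.  Applied to a detour, through an
   S-geodesic, around the vertex of the A-geodesic farthest from it, this bounds that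
   distance uniformly (a Morse lemma), and then every vertex of the S-geodesic is close to
   the A-geodesic too.  So an S-triangle of units stays close to the thin A-triangle with
   the same corners, and is thin. *)

From Stdlib Require Import List Arith Lia Classical ProofIrrelevance.
Import ListNotations.

#[local] Arguments path_end : simpl never.

Lemma nat_least_element (P : nat -> Prop) :
  (exists n, P n) -> exists n, P n /\ forall m, P m -> n <= m.
Proof.
  intros HP.
  destruct (dec_inh_nat_subset_has_unique_least_element P (fun n => classic (P n)) HP)
    as [n [[Pn Hmin] _]].
  eauto.
Qed.

Lemma square_le_pow2 k : 4 <= k -> k * k <= 2 ^ k.
Proof.
  induction 1 as [|k Hk IH]; [simpl; lia|].
  rewrite Nat.pow_succ_r'. nia.
Qed.

Lemma linear_le_pow2 a b k : a + b + 4 <= k -> a * k + b <= 2 ^ k.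
Proof. intros Hk. transitivity (k * k); [nia|apply square_le_pow2; lia]. Qed.

Lemma log_bound a b c :
  exists C, forall D, (forall k, c * D <= 2 ^ k -> D <= a * k + b) -> D <= C.
Proof.
  set (k0 := c * a + c * (a + b) + 4). exists (a * k0 + b). intros D HD.
  destruct (nat_least_element (fun k => c * D <= 2 ^ k)) as [k [Hk Hmin]].
  { exists (c * D). apply Nat.lt_le_incl, Nat.pow_gt_lin_r. lia. }
  specialize (HD k Hk).
  destruct (Nat.le_gt_cases k k0) as [Hle|Hgt]; [nia|exfalso].
  destruct k as [|k]; [lia|].
  assert (Hlt : 2 ^ k < c * D) by (apply Nat.nle_gt; intros H; specialize (Hmin k H); lia).
  pose proof (linear_le_pow2 (c * a) (c * (a + b)) k ltac:(lia)).
  pose proof (Nat.mul_le_mono_l _ _ c HD).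
  nia.
Qed.

Section ListSplit.
Variable A : Type.
Implicit Type l : list A.

Lemma list_split_le l n m : length l <= n + m ->
  exists l1 l2, l = l1 ++ l2 /\ length l1 <= n /\ length l2 <= m.
Proof.
  intros Hl. exists (firstn n l), (skipn n l).
  rewrite firstn_skipn, length_firstn, length_skipn. repeat split; lia.
Qed.

Lemma list_split_prefix l m :
  exists l1 l2, l = l1 ++ l2 /\ length l1 <= m /\ (l2 = [] \/ length l1 = m).
Proof.
  exists (firstn m l), (skipn m l). rewrite firstn_skipn, length_firstn.
  repeat split; [lia|].
  destruct (Nat.le_gt_cases (length l) m); [left; now apply skipn_all2|right; lia].
Qed.

Lemma list_split_suffix l m :
  exists l1 l2, l = l1 ++ l2 /\ length l2 <= m /\ (l1 = [] \/ length l2 = m).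
Proof.
  exists (firstn (length l - m) l), (skipn (length l - m) l).
  rewrite firstn_skipn, length_skipn. repeat split; [lia|].
  destruct (Nat.le_gt_cases (length l) m); [left|right; lia].
  now replace (length l - m) with 0 by lia.
Qed.

End ListSplit.

Lemma list_bounded_witness {X Y : Type} (P : X -> list Y -> Prop) (l : list X) :
  (forall x, In x l -> exists w, P x w) ->
  exists K, forall x, In x l -> exists w, P x w /\ length w <= K.
Proof.
  induction l as [|x l IH]; intros H.
  - exists 0. intros _ [].
  - destruct (H x (or_introl eq_refl)) as [w Hw].
    destruct IH as [K HK]; [intros y Hy; apply H; now right|].
    exists (Nat.max (length w) K). intros y [<-|Hy].
    + exists w. split; auto. lia.
    + destruct (HK y Hy) as [w' [Hw' Hl]]. exists w'. split; auto. lia.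
Qed.

Section Paths.
Variables (V : Type) (E : V -> V -> Prop).
Implicit Types (x y z u : V) (p q : list V).

Lemma path_end_cons x y p : path_end x (y :: p) = path_end y p.
Proof.
  unfold path_end. revert x y. induction p as [|z p IH]; intros x y; auto.
  destruct p as [|w p]; auto. simpl in *. rewrite (IH x z). symmetry. apply (IH y z).
Qed.

Lemma path_end_app x p q : path_end x (p ++ q) = path_end (path_end x p) q.
Proof.
  revert x. induction p as [|y p IH]; intros x; auto.
  rewrite <- app_comm_cons, !path_end_cons. apply IH.
Qed.

Lemma path_end_in x p : In (path_end x p) (x :: p).
Proof.
  revert x. induction p as [|y p IH]; intros x; [now left|].
  rewrite path_end_cons. right. apply IH.
Qed.

Lemma is_path_app x p q :
  is_path E x (p ++ q) <-> is_path E x p /\ is_path E (path_end x p) q.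
Proof.
  revert x. induction p as [|y p IH]; intros x; simpl.
  - unfold path_end. simpl. tauto.
  - rewrite path_end_cons, IH. tauto.
Qed.

Lemma in_path_app x p q u :
  In u (x :: p ++ q) -> In u (x :: p) \/ In u (path_end x p :: q).
Proof.
  intros [Hu|Hu]; [left; now left|].
  apply in_app_or in Hu as [Hu|Hu]; [left; now right|right; now right].
Qed.

Lemma in_path_app_l x p q u : In u (x :: p) -> In u (x :: p ++ q).
Proof. intros [Hu|Hu]; [now left|right; apply in_or_app; auto]. Qed.

Lemma in_path_app_r x p q u : In u (path_end x p :: q) -> In u (x :: p ++ q).
Proof.
  intros [<-|Hu].
  - apply in_path_app_l, path_end_in.
  - right. apply in_or_app. auto.
Qed.

Lemma in_path_split x p u :
  In u (x :: p) -> exists p1 p2, p = p1 ++ p2 /\ path_end x p1 = u.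
Proof.
  intros [<-|Hu]; [now exists [], p|].
  apply in_split in Hu as [l1 [l2 ->]].
  exists (l1 ++ [u]), l2. rewrite <- app_assoc, path_end_app. auto.
Qed.

Lemma path_walk x p : is_path E x p -> walk E x (path_end x p) (length p).
Proof. intros. exists p. auto. Qed.

Lemma walk_trans x y z n m : walk E x y n -> walk E y z m -> walk E x z (n + m).
Proof.
  intros [p [<- [Hp <-]]] [q [<- [Hq <-]]].
  exists (p ++ q). rewrite length_app, is_path_app, path_end_app. auto.
Qed.

Lemma dist_le_refl x n : dist_le E x x n.
Proof. exists 0. split; [lia|]. exists []. simpl. auto. Qed.

Lemma dist_le_weaken x y n m : dist_le E x y n -> n <= m -> dist_le E x y m.
Proof. intros [k [Hk W]] Hm. exists k. split; [lia|auto]. Qed.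

Lemma dist_le_trans x y z n m :
  dist_le E x y n -> dist_le E y z m -> dist_le E x z (n + m).
Proof.
  intros [k [Hk W]] [k' [Hk' W']]. exists (k + k'). split; [lia|]. eapply walk_trans; eauto.
Qed.

Lemma dist_le_edge x y : E x y -> dist_le E x y 1.
Proof. intros H. exists 1. split; auto. exists [y]. simpl. auto. Qed.

Lemma dist_le_path x p : is_path E x p -> dist_le E x (path_end x p) (length p).
Proof. intros Hp. exists (length p). split; auto. now apply path_walk. Qed.

Lemma dist_le_walk x y n :
  dist_le E x y n -> exists p, is_path E x p /\ path_end x p = y /\ length p <= n.
Proof. intros [k [Hk [p [<- [Hp He]]]]]. eauto. Qed.

Lemma dist_le_to_vertex x p u : is_path E x p -> In u (x :: p) -> dist_le E x u (length p).
Proof.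
  intros Hp Hu. destruct (in_path_split x p u Hu) as [p1 [p2 [-> <-]]].
  apply is_path_app in Hp as [Hp1 _].
  apply (dist_le_weaken _ _ (length p1)); [now apply dist_le_path|].
  rewrite length_app. lia.
Qed.

Lemma dist_le_from_vertex x p u :
  is_path E x p -> In u (x :: p) -> dist_le E u (path_end x p) (length p).
Proof.
  intros Hp Hu. destruct (in_path_split x p u Hu) as [p1 [p2 [-> <-]]].
  apply is_path_app in Hp as [_ Hp2].
  apply (dist_le_weaken _ _ (length p2)).
  - rewrite path_end_app. now apply dist_le_path.
  - rewrite length_app. lia.
Qed.

Lemma geodesic_exists x y n : walk E x y n -> exists r, geodesic E x r /\ path_end x r = y.
Proof.
  intros W.
  destruct (nat_least_element (walk E x y) (ex_intro _ n W))
    as [m [[r [<- [Hr He]]] Hmin]].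
  exists r. repeat split; auto. intros k Wk. rewrite He in Wk. auto.
Qed.

Lemma geodesic_infix_le x p1 p2 p3 n : geodesic E x (p1 ++ p2 ++ p3) ->
  walk E (path_end x p1) (path_end x (p1 ++ p2)) n -> length p2 <= n.
Proof.
  intros [Hp Hgeo] W.
  rewrite app_assoc in Hp, Hgeo. rewrite path_end_app in Hgeo.
  apply is_path_app in Hp as [H12 H3]. apply is_path_app in H12 as [H1 _].
  pose proof (Hgeo _ (walk_trans _ _ _ _ _ (walk_trans _ _ _ _ _ (path_walk _ _ H1) W)
                                           (path_walk _ _ H3))) as Hle.
  rewrite !length_app in Hle. lia.
Qed.

Lemma geodesic_infix x p1 p2 p3 :
  geodesic E x (p1 ++ p2 ++ p3) -> geodesic E (path_end x p1) p2.
Proof.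
  intros G. split.
  - destruct G as [Hp _]. apply is_path_app in Hp as [_ Hp].
    now apply is_path_app in Hp as [Hp _].
  - intros n W. eapply geodesic_infix_le; eauto. now rewrite path_end_app.
Qed.

Lemma path_crossing x r (A B : V -> Prop) : is_path E x r -> A x -> B (path_end x r) ->
  (forall v, In v (x :: r) -> A v \/ B v) ->
  exists a b, A a /\ B b /\ (a = b \/ E a b) /\ In a (x :: r) /\ In b (x :: r).
Proof.
  revert x. induction r as [|z r IH]; intros x Hp HA HB Hall.
  - exists x, x. repeat split; auto; now left.
  - destruct Hp as [Hxz Hp]. rewrite path_end_cons in HB.
    destruct (Hall z (or_intror (or_introl eq_refl))) as [Hz|Hz].
    + destruct (IH z Hp Hz HB (fun v Hv => Hall v (or_intror Hv)))
        as [a [b [Ha [Hb [Hab [Ha' Hb']]]]]].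
      exists a, b. repeat split; auto; now right.
    + exists x, z. repeat split; auto; [now left|now right; left].
Qed.

Lemma geodesic_between x g1 g2 w1 w2 n : geodesic E x (g1 ++ g2) ->
  In w1 (x :: g1) -> In w2 (path_end x g1 :: g2) ->
  dist_le E w1 w2 n -> dist_le E w1 (path_end x g1) n.
Proof.
  intros Hg H1 H2 [k [Hk W]].
  destruct (in_path_split x g1 w1 H1) as [a1 [a2 [-> <-]]].
  destruct (in_path_split _ g2 w2 H2) as [b1 [b2 [-> <-]]].
  assert (Hg' : geodesic E x (a1 ++ (a2 ++ b1) ++ b2)) by (now rewrite <- !app_assoc in *).
  assert (Hl : length (a2 ++ b1) <= k).
  { apply (geodesic_infix_le _ _ _ _ _ Hg'). rewrite app_assoc, path_end_app. exact W. }
  apply (dist_le_weaken _ _ (length a2)); [|rewrite length_app in Hl; lia].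
  rewrite path_end_app. apply dist_le_path.
  destruct Hg as [Hp _]. apply is_path_app in Hp as [Hp _]. now apply is_path_app in Hp.
Qed.

Section Symmetric.
Hypothesis E_sym : forall x y, E x y -> E y x.

Lemma path_rev x p : is_path E x p -> exists q, length q = length p /\
  is_path E (path_end x p) q /\ path_end (path_end x p) q = x /\
  forall u, In u (path_end x p :: q) -> In u (x :: p).
Proof.
  revert x. induction p as [|y p IH]; intros x Hp.
  - exists []. repeat split; auto.
  - destruct Hp as [Hxy Hp]. destruct (IH y Hp) as [q [Hl [Hq [He Hin]]]].
    rewrite path_end_cons. exists (q ++ [x]). repeat split.
    + rewrite length_app. simpl. lia.
    + apply is_path_app. rewrite He. simpl. repeat split; auto.
    + rewrite path_end_app, He. reflexivity.
    + intros u Hu. apply in_path_app in Hu as [Hu|Hu].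
      * apply Hin in Hu. right. exact Hu.
      * rewrite He in Hu. destruct Hu as [<-|[<-|[]]]; [right; left|left]; auto.
Qed.

Lemma dist_le_sym x y n : dist_le E x y n -> dist_le E y x n.
Proof.
  intros [k [Hk [p [<- [Hp <-]]]]]. destruct (path_rev x p Hp) as [q [Hq [Hq' [He _]]]].
  exists (length p). split; auto. exists q. auto.
Qed.

Lemma geodesic_subpath x g w1 w2 n : geodesic E x g ->
  In w1 (x :: g) -> In w2 (x :: g) -> dist_le E w1 w2 n ->
  exists W, is_path E w1 W /\ path_end w1 W = w2 /\ length W <= n /\
    forall u, In u (w1 :: W) -> In u (x :: g).
Proof.
  intros Hg H1 H2 Hd.
  destruct (in_path_split x g w1 H1) as [a1 [a2 [-> Hw1]]].
  destruct (in_path_split x (a1 ++ a2) w2 H2) as [b1 [b2 [Hab Hw2]]].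
  apply app_eq_app in Hab as [l [[-> ->]|[-> ->]]].
  - rewrite <- app_assoc in Hg |- *.
    pose proof (geodesic_infix x b1 l a2 Hg) as [Hl Hgeo].
    rewrite path_end_app, Hw2 in Hw1. rewrite Hw2, Hw1 in Hgeo. rewrite Hw2 in Hl.
    destruct (dist_le_sym _ _ _ Hd) as [k [Hk W]].
    destruct (path_rev w2 l Hl) as [q [Hq [Hqp [Hqe Hqin]]]].
    rewrite Hw1 in Hqp, Hqe, Hqin.
    exists q. repeat split; auto.
    + specialize (Hgeo k W). lia.
    + intros u Hu. apply in_path_app_r, in_path_app_l. rewrite Hw2. auto.
  - pose proof (geodesic_infix x a1 l b2 Hg) as [Hl Hgeo].
    rewrite path_end_app, Hw1 in Hw2. rewrite Hw1, Hw2 in Hgeo. rewrite Hw1 in Hl.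
    destruct Hd as [k [Hk W]].
    exists l. repeat split; auto.
    + specialize (Hgeo k W). lia.
    + intros u Hu. apply in_path_app_r, in_path_app_l. rewrite Hw1. auto.
Qed.

End Symmetric.
End Paths.

(* [EA] and [ES] stand for the Cayley graphs of M with respect to A and S, [U] for its units. *)
Section Comparison.
Variables (V : Type) (EA ES : V -> V -> Prop) (U : V -> Prop) (d K : nat).
Implicit Types (x y z u v w s : V) (p q c g r W : list V).
Hypothesis EA_thin : strongly_hyperbolic_graph_delta EA d.
Hypothesis EA_ES : forall x y, EA x y -> U y -> ES x y /\ U x.
Hypothesis ES_U : forall x y, ES x y -> U x -> U y.
Hypothesis ES_sym : forall x y, ES x y -> ES y x.
Hypothesis K_pos : 1 <= K.
Hypothesis ES_EA : forall x y, ES x y -> U x ->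
  exists c, is_path EA x c /\ path_end x c = y /\ length c <= K.

Notation dS := (dist_le ES).
Notation dA := (dist_le EA).

Definition near_path n x g v := exists w, In w (x :: g) /\ dS v w n.

Lemma near_path_vertex n x g v : In v (x :: g) -> near_path n x g v.
Proof. intros Hv. exists v. split; auto. apply dist_le_refl. Qed.

Lemma near_path_weaken n m x g v : near_path n x g v -> n <= m -> near_path m x g v.
Proof. intros [w [Hw Hd]] Hnm. exists w. split; auto. eapply dist_le_weaken; eauto. Qed.

Lemma near_path_trans n m x g v s : dS v s n -> near_path m x g s -> near_path (n + m) x g v.
Proof. intros Hvs [w [Hw Hsw]]. exists w. split; auto. eapply dist_le_trans; eauto. Qed.

Lemma near_path_app_l n x g1 g2 v : near_path n x g1 v -> near_path n x (g1 ++ g2) v.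
Proof. intros [w [Hw Hd]]. exists w. split; auto. now apply in_path_app_l. Qed.

Lemma near_path_app_r n x g1 g2 v :
  near_path n (path_end x g1) g2 v -> near_path n x (g1 ++ g2) v.
Proof. intros [w [Hw Hd]]. exists w. split; auto. now apply in_path_app_r. Qed.

Lemma EA_path_units x p : is_path EA x p -> U (path_end x p) ->
  forall u, In u (x :: p) -> U u.
Proof.
  revert x. induction p as [|y p IH]; intros x Hp He u Hu.
  - now destruct Hu as [<-|[]].
  - destruct Hp as [Hxy Hp]. rewrite path_end_cons in He.
    destruct Hu as [<-|Hu].
    + exact (proj2 (EA_ES _ _ Hxy (IH y Hp He y (or_introl eq_refl)))).
    + exact (IH y Hp He u Hu).
Qed.

Lemma EA_path_ES x p : is_path EA x p -> U (path_end x p) -> is_path ES x p.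
Proof.
  revert x. induction p as [|y p IH]; intros x Hp He; simpl; auto.
  destruct Hp as [Hxy Hp]. rewrite path_end_cons in He. split; auto.
  exact (proj1 (EA_ES _ _ Hxy (EA_path_units y p Hp He y (or_introl eq_refl)))).
Qed.

Lemma dA_dS x y n : dA x y n -> U y -> dS x y n.
Proof.
  intros [k [Hk [p [Hl [Hp <-]]]]] Hy. exists k. split; auto.
  exists p. auto using EA_path_ES.
Qed.

Lemma ES_path_units x p : is_path ES x p -> U x -> forall u, In u (x :: p) -> U u.
Proof.
  revert x. induction p as [|y p IH]; intros x Hp Hx u Hu.
  - now destruct Hu as [<-|[]].
  - destruct Hp as [Hxy Hp]. destruct Hu as [<-|Hu]; auto.
    exact (IH y Hp (ES_U _ _ Hxy Hx) u Hu).
Qed.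

Lemma ES_path_EA x W : is_path ES x W -> U x -> exists c, is_path EA x c /\
  path_end x c = path_end x W /\ length c <= K * length W /\
  forall u, In u (x :: c) -> near_path K x W u.
Proof.
  revert x. induction W as [|y W IH]; intros x HW Hx.
  - exists []. repeat split; auto; simpl; try lia. intros u Hu. now apply near_path_vertex.
  - destruct HW as [Hxy HW]. destruct (ES_EA _ _ Hxy Hx) as [c1 [Hc1 [He1 Hl1]]].
    destruct (IH y HW (ES_U _ _ Hxy Hx)) as [c2 [Hc2 [He2 [Hl2 Hnear2]]]].
    exists (c1 ++ c2). repeat split.
    + apply is_path_app. rewrite He1. auto.
    + rewrite path_end_app, He1, He2, path_end_cons. reflexivity.
    + rewrite length_app. simpl. nia.
    + intros u Hu. apply in_path_app in Hu as [Hu|Hu].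
      * exists x. split; [now left|]. apply (dist_le_sym _ _ ES_sym).
        apply (dist_le_weaken _ _ _ _ (length c1)); [|lia].
        apply dA_dS; [now apply dist_le_to_vertex|].
        apply (EA_path_units x c1 Hc1); auto. rewrite He1. exact (ES_U _ _ Hxy Hx).
      * rewrite He1 in Hu. destruct (Hnear2 u Hu) as [w [Hw Hd]].
        exists w. split; [now right|auto].
Qed.

Lemma dS_dA x y n : dS x y n -> U x -> dA x y (K * n).
Proof.
  intros Hd Hx. destruct (dist_le_walk _ _ _ _ _ Hd) as [p [Hp [<- Hl]]].
  destruct (ES_path_EA x p Hp Hx) as [c [Hc [He [Hlc _]]]].
  rewrite <- He. apply (dist_le_weaken _ _ _ _ (length c)); [now apply dist_le_path|nia].
Qed.

(* Divide and conquer on the length of [c]: the thinness of one EA-triangle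
   costs [d] and halves the length. *)
Lemma geodesic_near_EA_path k x c r : is_path EA x c -> U (path_end x c) ->
  length c <= 2 ^ k -> geodesic EA x r -> path_end x r = path_end x c ->
  forall v, In v (x :: r) -> near_path (d * k) x c v.
Proof.
  revert x c r. induction k as [|k IH]; intros x c r Hc HU Hl Hr Her v Hv.
  - assert (Hlr : length r <= length c) by (apply Hr; rewrite Her; now apply path_walk).
    apply near_path_vertex.
    destruct r as [|z [|z' r]]; simpl in Hl, Hlr; try lia.
    + destruct Hv as [<-|[]]. now left.
    + destruct Hv as [<-|[<-|[]]]; [now left|].
      replace z with (path_end x c) by (symmetry; exact Her). apply path_end_in.
  - assert (Hunits : forall u, In u (x :: c) -> U u) by exact (EA_path_units x c Hc HU).
    assert (HUr : forall u, In u (x :: r) -> U u)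
      by (apply (EA_path_units x r); [apply Hr|congruence]).
    destruct (list_split_le _ c (2 ^ k) (2 ^ k) ltac:(simpl in Hl; lia))
      as [c1 [c2 [-> [Hl1 Hl2]]]].
    apply is_path_app in Hc as [Hc1 Hc2]. rewrite path_end_app in HU, Her.
    destruct (geodesic_exists _ _ _ _ _ (path_walk _ _ _ _ Hc1)) as [p [Hp Hpe]].
    destruct (geodesic_exists _ _ _ _ _ (path_walk _ _ _ _ Hc2)) as [q [Hq Hqe]].
    set (m := path_end x c1) in *.
    assert (Htri : geodesic_triangle EA x p m q x r)
      by (repeat split; try apply Hp; try apply Hq; try apply Hr; congruence).
    destruct (EA_thin _ _ _ _ _ _ Htri) as [Hside _].
    replace (d * S k) with (d + d * k) by lia.
    destruct (Hside v Hv) as [[s [Hs Hsv]]|[s [Hs Hvs]]].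
    + apply near_path_app_l, (near_path_trans _ _ _ _ _ s).
      * apply (dist_le_sym _ _ ES_sym), dA_dS; auto.
      * apply (IH x c1 p); auto. apply Hunits, in_path_app_l, path_end_in.
    + apply near_path_app_r, (near_path_trans _ _ _ _ _ s).
      * apply dA_dS; auto. apply (EA_path_units m q); [apply Hq|congruence|auto].
      * apply (IH m c2 q); auto.
Qed.

Lemma geodesic_near_ES_path k y W r : is_path ES y W -> U y -> K * length W <= 2 ^ k ->
  geodesic EA y r -> path_end y r = path_end y W ->
  forall v, In v (y :: r) -> near_path (d * k + K) y W v.
Proof.
  intros HW Hy Hl Hr He v Hv.
  destruct (ES_path_EA y W HW Hy) as [c [Hc [Hce [Hcl Hnear]]]].
  assert (HU : U (path_end y c))
    by (rewrite Hce; apply (ES_path_units y W HW Hy), path_end_in).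
  destruct (geodesic_near_EA_path k y c r Hc HU ltac:(lia) Hr ltac:(congruence) v Hv)
    as [u [Hu Hvu]].
  exact (near_path_trans _ _ _ _ _ _ Hvu (Hnear u Hu)).
Qed.


Lemma EA_geodesic_far x p1 p2 p3 n : geodesic EA x (p1 ++ p2 ++ p3) ->
  U (path_end x p1) -> K * n < length p2 ->
  ~ dS (path_end x p1) (path_end x (p1 ++ p2)) n.
Proof.
  intros Hg HU Hlt Hd. destruct (dS_dA _ _ _ Hd HU) as [k [Hk W]].
  pose proof (geodesic_infix_le _ _ _ _ _ _ _ Hg W). nia.
Qed.

Lemma path_avoiding_to_geodesic x g y v0 D D1 :
  (forall w, In w (x :: g) -> ~ dS v0 w D) ->
  near_path D1 x g y -> In y (x :: g) \/ ~ dS y v0 (D1 + D) ->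
  exists w W, In w (x :: g) /\ is_path ES y W /\ path_end y W = w /\ length W <= D1 /\
    forall u, In u (y :: W) -> ~ dS v0 u D.
Proof.
  intros Hfar [w [Hw Hyw]] [Hy|Hy].
  - exists y, []. repeat split; auto. all: try (simpl; lia). intros u [<-|[]]. auto.
  - destruct (dist_le_walk _ _ _ _ _ Hyw) as [W [HW [HWe HWl]]].
    exists w, W. repeat split; auto.
    intros u Hu Hv0u. apply Hy. apply (dist_le_trans _ _ _ u).
    + apply (dist_le_weaken _ _ _ _ (length W)); auto. now apply dist_le_to_vertex.
    + now apply (dist_le_sym _ _ ES_sym).
Qed.

Lemma path_avoiding_from_geodesic x g z v0 D D1 :
  (forall w, In w (x :: g) -> ~ dS v0 w D) ->
  near_path D1 x g z -> In z (x :: g) \/ ~ dS z v0 (D1 + D) ->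
  exists w W, In w (x :: g) /\ is_path ES w W /\ path_end w W = z /\ length W <= D1 /\
    forall u, In u (w :: W) -> ~ dS v0 u D.
Proof.
  intros Hfar Hnear Hz.
  destruct (path_avoiding_to_geodesic x g z v0 D D1 Hfar Hnear Hz)
    as [w [W [Hw [HW [<- [Hl Hav]]]]]].
  destruct (path_rev _ _ ES_sym z W HW) as [W' [Hl' [HW' [He' Hin']]]].
  exists (path_end z W), W'. repeat split; auto. lia.
Qed.

Lemma avoiding_detour x g y z v0 D D1 n : geodesic ES x g ->
  (forall w, In w (x :: g) -> ~ dS v0 w D) ->
  near_path D1 x g y -> In y (x :: g) \/ ~ dS y v0 (D1 + D) ->
  near_path D1 x g z -> In z (x :: g) \/ ~ dS z v0 (D1 + D) ->
  dS y z n ->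
  exists W, is_path ES y W /\ path_end y W = z /\ length W <= 4 * D1 + n /\
    forall u, In u (y :: W) -> ~ dS v0 u D.
Proof.
  intros Hg Hfar Hny Hy Hnz Hz Hyz.
  destruct (path_avoiding_to_geodesic x g y v0 D D1 Hfar Hny Hy)
    as [w1 [W1 [Hw1 [HW1 [HW1e [HW1l HW1av]]]]]].
  destruct (path_avoiding_from_geodesic x g z v0 D D1 Hfar Hnz Hz)
    as [w2 [W3 [Hw2 [HW3 [HW3e [HW3l HW3av]]]]]].
  assert (Hw12 : dS w1 w2 (D1 + n + D1)).
  { apply (dist_le_trans _ _ _ z); [apply (dist_le_trans _ _ _ y); auto|].
    - apply (dist_le_sym _ _ ES_sym), (dist_le_weaken _ _ _ _ (length W1)); auto.
      rewrite <- HW1e. now apply dist_le_path.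
    - apply (dist_le_sym _ _ ES_sym), (dist_le_weaken _ _ _ _ (length W3)); auto.
      rewrite <- HW3e. now apply dist_le_path. }
  destruct (geodesic_subpath _ _ ES_sym x g w1 w2 _ Hg Hw1 Hw2 Hw12)
    as [W2 [HW2 [HW2e [HW2l HW2in]]]].
  exists (W1 ++ W2 ++ W3). repeat split.
  - apply is_path_app. rewrite HW1e, is_path_app, HW2e. auto.
  - rewrite !path_end_app, HW1e, HW2e. exact HW3e.
  - rewrite !length_app. lia.
  - intros u Hu. apply in_path_app in Hu as [Hu|Hu]; auto.
    rewrite HW1e in Hu. apply in_path_app in Hu as [Hu|Hu]; auto.
    rewrite HW2e in Hu. auto.
Qed.

Lemma EA_geodesic_window x r v0 m n : geodesic EA x r ->
  (forall u, In u (x :: r) -> U u) -> In v0 (x :: r) -> K * n < m ->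
  exists y rs, In y (x :: r) /\ In (path_end y rs) (x :: r) /\ geodesic EA y rs /\
    In v0 (y :: rs) /\ length rs <= 2 * m /\
    (y = x \/ ~ dS y v0 n) /\ (path_end y rs = path_end x r \/ ~ dS (path_end y rs) v0 n).
Proof.
  intros Hr HUr Hv0 Hmn.
  destruct (in_path_split _ x r v0 Hv0) as [r1 [r2 [Hr12 Hv0e]]].
  destruct (list_split_suffix _ r1 m) as [r1a [r1b [-> [Hl1 Hy]]]].
  destruct (list_split_prefix _ r2 m) as [r2a [r2b [-> [Hl2 Hz]]]].
  set (y := path_end x r1a).
  assert (Hyv0 : path_end y r1b = v0) by (rewrite <- Hv0e, path_end_app; reflexivity).
  assert (Hr' : r = r1a ++ (r1b ++ r2a) ++ r2b) by (rewrite Hr12; now rewrite <- !app_assoc).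
  exists y, (r1b ++ r2a). split; [|split; [|split; [|split; [|split; [|split]]]]].
  - rewrite Hr'. apply in_path_app_l, path_end_in.
  - rewrite Hr', app_assoc. apply in_path_app_l.
    replace (path_end y _) with (path_end x (r1a ++ r1b ++ r2a)) by apply path_end_app.
    apply path_end_in.
  - apply (geodesic_infix _ _ x _ _ r2b). congruence.
  - rewrite <- Hyv0. apply in_path_app_l, path_end_in.
  - rewrite length_app. lia.
  - destruct Hy as [-> | Hlen]; [now left|right]. intros Hd.
    apply (EA_geodesic_far x r1a r1b (r2a ++ r2b) n).
    + rewrite app_assoc, <- Hr12. exact Hr.
    + apply HUr. rewrite Hr'. apply in_path_app_l, path_end_in.
    + lia.
    + rewrite Hv0e. exact Hd.
  - destruct Hz as [-> | Hlen]; [left|right].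
    + rewrite Hr12, app_nil_r, <- app_assoc, (path_end_app _ x r1a). reflexivity.
    + intros Hd. rewrite path_end_app, Hyv0 in Hd.
      apply (EA_geodesic_far x (r1a ++ r1b) r2a r2b n).
      * rewrite <- Hr12. exact Hr.
      * rewrite Hv0e. apply HUr, Hv0.
      * lia.
      * rewrite (path_end_app _ x (r1a ++ r1b)), Hv0e. now apply (dist_le_sym _ _ ES_sym).
Qed.

(* A vertex [v0] of [r] at distance [S D] from [g] would admit a detour through [g]
   avoiding its [D]-ball, yet short enough to pass within [d k + K <= D] of it. *)
Lemma near_geodesic_improve k D x g r : U x -> geodesic ES x g -> geodesic EA x r ->
  path_end x r = path_end x g -> K * (4 + 4 * K) * S D <= 2 ^ k -> d * k + K <= D ->
  (forall v, In v (x :: r) -> near_path (S D) x g v) ->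
  forall v, In v (x :: r) -> near_path D x g v.
Proof.
  intros Hx Hg Hr Hend Hk HD Hnear v0 Hv0. apply NNPP. intros Hfar0.
  assert (Hfar : forall w, In w (x :: g) -> ~ dS v0 w D)
    by (intros w Hw Hd; apply Hfar0; exists w; auto).
  assert (HUr : forall u, In u (x :: r) -> U u).
  { apply (EA_path_units x r); [apply Hr|]. rewrite Hend.
    apply (ES_path_units x g); [apply Hg|auto|apply path_end_in]. }
  destruct (EA_geodesic_window x r v0 (2 * K * S D) (S D + D) Hr HUr Hv0 ltac:(nia))
    as [y [rs [Hy [Hz [Hrs [Hv0rs [Hl [Hyfar Hzfar]]]]]]]].
  assert (Hy' : In y (x :: g) \/ ~ dS y v0 (S D + D))
    by (destruct Hyfar as [->|]; [left; now left|now right]).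
  assert (Hz' : In (path_end y rs) (x :: g) \/ ~ dS (path_end y rs) v0 (S D + D))
    by (destruct Hzfar as [->|]; [left; rewrite Hend; apply path_end_in|now right]).
  assert (Hyz : dS y (path_end y rs) (length rs))
    by (apply dA_dS; [apply dist_le_path, (proj1 Hrs)|apply HUr, Hz]).
  destruct (avoiding_detour x g y _ v0 D (S D) _ Hg Hfar (Hnear y Hy) Hy' (Hnear _ Hz) Hz' Hyz)
    as [W [HW [HWe [HWl HWav]]]].
  destruct (geodesic_near_ES_path k y W rs HW (HUr y Hy) ltac:(nia) Hrs ltac:(congruence) v0 Hv0rs)
    as [u [Hu Hv0u]].
  apply (HWav u Hu). eapply dist_le_weaken; eauto.
Qed.

Definition EA_geodesics_near Dm := forall x g r, U x -> geodesic ES x g ->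
  geodesic EA x r -> path_end x r = path_end x g ->
  forall v, In v (x :: r) -> near_path Dm x g v.

Lemma EA_geodesics_near_bounded : exists Dm, EA_geodesics_near Dm.
Proof.
  destruct (log_bound d K (K * (4 + 4 * K))) as [C HC].
  exists C. intros x g r Hx Hg Hr Hend.
  assert (HUe : U (path_end x r))
    by (rewrite Hend; apply (ES_path_units x g (proj1 Hg) Hx), path_end_in).
  destruct (nat_least_element (fun n => forall v, In v (x :: r) -> near_path n x g v))
    as [D [HD Hmin]].
  { exists (length r). intros v Hv. exists (path_end x g). split; [apply path_end_in|].
    rewrite <- Hend. apply dA_dS; auto. apply dist_le_from_vertex; [apply Hr|exact Hv]. }
  intros v Hv. apply (near_path_weaken D); [now apply HD|].
  apply HC. intros k Hk. apply Nat.nlt_ge. intros HkD.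
  destruct D as [|D]; [lia|].
  pose proof (Hmin D (near_geodesic_improve k D x g r Hx Hg Hr Hend Hk ltac:(lia) HD)).
  lia.
Qed.

Lemma ES_geodesic_near_EA_geodesic Dm x g r : U x -> geodesic ES x g ->
  geodesic EA x r -> path_end x r = path_end x g ->
  (forall v, In v (x :: r) -> near_path Dm x g v) ->
  forall u, In u (x :: g) -> near_path (3 * Dm + 1) x r u.
Proof.
  intros Hx Hg Hr Hend Hnear u Hu.
  assert (HUr : forall u, In u (x :: r) -> U u).
  { apply (EA_path_units x r (proj1 Hr)). rewrite Hend.
    apply (ES_path_units x g (proj1 Hg) Hx), path_end_in. }
  destruct (in_path_split _ x g u Hu) as [g1 [g2 [-> Hue]]].
  destruct (path_crossing _ _ x r (near_path Dm x g1) (near_path Dm u g2) (proj1 Hr))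
    as [a [b [[w1 [Hw1 Ha]] [[w2 [Hw2 Hb]] [Hab [Ha' Hb']]]]]].
  - apply near_path_vertex. now left.
  - apply near_path_vertex. rewrite Hend, path_end_app, Hue. apply path_end_in.
  - intros v Hv. destruct (Hnear v Hv) as [w [Hw Hd]].
    apply in_path_app in Hw as [Hw|Hw]; rewrite ?Hue in Hw; [left|right]; exists w; auto.
  - assert (Hab1 : dS a b 1).
    { destruct Hab as [<-|Hab]; [apply dist_le_refl|].
      exact (dist_le_edge _ _ _ _ (proj1 (EA_ES _ _ Hab (HUr b Hb')))). }
    assert (Hw12 : dS w1 w2 (Dm + 1 + Dm)).
    { apply (dist_le_trans _ _ _ b); [apply (dist_le_trans _ _ _ a)|]; auto.
      now apply (dist_le_sym _ _ ES_sym). }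
    rewrite <- Hue in Hw2.
    pose proof (geodesic_between _ _ _ _ _ _ _ _ Hg Hw1 Hw2 Hw12) as Hw1u.
    rewrite Hue in Hw1u.
    exists a. split; auto.
    apply (dist_le_weaken _ _ _ _ (Dm + 1 + Dm + Dm)); [|lia].
    apply (dist_le_trans _ _ _ w1); now apply (dist_le_sym _ _ ES_sym).
Qed.

Lemma EA_fellow_geodesic Dm x p : EA_geodesics_near Dm -> U x -> geodesic ES x p ->
  exists pA, geodesic EA x pA /\ path_end x pA = path_end x p /\
    (forall u, In u (x :: pA) -> U u) /\
    (forall v, In v (x :: pA) -> near_path Dm x p v) /\
    (forall v, In v (x :: p) -> near_path (3 * Dm + 1) x pA v).
Proof.
  intros HM Hx Hp.
  assert (HUe : U (path_end x p)) by (apply (ES_path_units x p (proj1 Hp) Hx), path_end_in).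
  destruct (dS_dA x (path_end x p) (length p)) as [k [_ W]]; auto.
  { apply dist_le_path, Hp. }
  destruct (geodesic_exists _ _ _ _ _ W) as [pA [HpA HpAe]].
  exists pA. do 2 (split; auto). split; [|split].
  - apply (EA_path_units x pA (proj1 HpA)). congruence.
  - now apply (HM x p pA).
  - apply (ES_geodesic_near_EA_geodesic Dm x p pA); auto. now apply (HM x p pA).
Qed.

Lemma EA_ball_near n x gA v : (forall u, In u (x :: gA) -> U u) -> U v ->
  in_out_ball EA n x gA v \/ in_in_ball EA n x gA v -> near_path n x gA v.
Proof.
  intros HU Hv [[s [Hs Hsv]]|[s [Hs Hvs]]]; exists s; split; auto.
  - apply (dist_le_sym _ _ ES_sym), dA_dS; auto.
  - apply dA_dS; auto.
Qed.

Lemma near_path_compose n m x g x' g' v : near_path n x' g' v ->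
  (forall s, In s (x' :: g') -> near_path m x g s) -> near_path (n + m) x g v.
Proof. intros [s [Hs Hvs]] H. exact (near_path_trans _ _ _ _ _ _ Hvs (H s Hs)). Qed.

Lemma thin_side_transfer n Dm x1 p1 x1' p1' x2 p2 x2' p2' x3 p3 x3' p3' :
  (forall v, In v (x1 :: p1) -> near_path (3 * Dm + 1) x1' p1' v) ->
  (forall a, In a (x1' :: p1') -> in_out_ball EA n x2' p2' a \/ in_in_ball EA n x3' p3' a) ->
  (forall u, In u (x1' :: p1') -> U u) ->
  (forall u, In u (x2' :: p2') -> U u) -> (forall u, In u (x3' :: p3') -> U u) ->
  (forall v, In v (x2' :: p2') -> near_path Dm x2 p2 v) ->
  (forall v, In v (x3' :: p3') -> near_path Dm x3 p3 v) ->
  forall v, In v (x1 :: p1) ->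
    in_out_ball ES (4 * Dm + 1 + n) x2 p2 v \/ in_in_ball ES (4 * Dm + 1 + n) x3 p3 v.
Proof.
  intros Hsh Hthin HU1 HU2 HU3 HM2 HM3 v Hv.
  destruct (Hsh v Hv) as [a [Ha Hva]].
  destruct (Hthin a Ha) as [Hb|Hb]; [left|right].
  - destruct (near_path_trans _ _ _ _ _ _ Hva
      (near_path_compose _ _ _ _ _ _ _ (EA_ball_near _ _ _ _ HU2 (HU1 a Ha) (or_introl Hb)) HM2))
      as [w [Hw Hvw]].
    exists w. split; auto. apply (dist_le_sym _ _ ES_sym).
    apply (dist_le_weaken _ _ _ _ _ _ Hvw). lia.
  - destruct (near_path_trans _ _ _ _ _ _ Hva
      (near_path_compose _ _ _ _ _ _ _ (EA_ball_near _ _ _ _ HU3 (HU1 a Ha) (or_intror Hb)) HM3))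
      as [w [Hw Hvw]].
    exists w. split; auto. apply (dist_le_weaken _ _ _ _ _ _ Hvw). lia.
Qed.

Theorem ES_triangles_thin : exists d', forall xp p xq q xr r, U xp ->
  geodesic_triangle ES xp p xq q xr r -> thin_triangle ES d' xp p xq q xr r.
Proof.
  destruct EA_geodesics_near_bounded as [Dm HM].
  exists (4 * Dm + 1 + d). intros xp p xq q xr r Hx [Gp [Gq [Gr [Hpe [-> Hre]]]]].
  assert (Hq : U xq) by (rewrite <- Hpe; apply (ES_path_units xp p (proj1 Gp) Hx), path_end_in).
  destruct (EA_fellow_geodesic Dm xp p HM Hx Gp) as [pA [GpA [HpAe [UpA [NpA Np]]]]].
  destruct (EA_fellow_geodesic Dm xq q HM Hq Gq) as [qA [GqA [HqAe [UqA [NqA Nq]]]]].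
  destruct (EA_fellow_geodesic Dm xp r HM Hx Gr) as [rA [GrA [HrAe [UrA [NrA Nr]]]]].
  assert (Htri : geodesic_triangle EA xp pA xq qA xp rA)
    by (repeat split; try apply GpA; try apply GqA; try apply GrA; congruence).
  destruct (EA_thin _ _ _ _ _ _ Htri) as [T1 [T2 T3]].
  split; [|split]; eapply thin_side_transfer; eauto.
Qed.

End Comparison.

Section Restriction.
Variables (V : Type) (U : V -> Prop) (E : V -> V -> Prop).
Hypothesis E_U : forall x y, E x y -> U x -> U y.

Definition restrict_rel (a b : {x | U x}) : Prop := E (proj1_sig a) (proj1_sig b).

Notation val := (@proj1_sig V U).
Implicit Types (a b : {x | U x}) (p : list {x | U x}).

Lemma is_path_restrict a p : is_path restrict_rel a p <-> is_path E (val a) (map val p).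
Proof. revert a. induction p as [|b p IH]; intros a; simpl; [tauto|]. now rewrite IH. Qed.

Lemma path_end_restrict a p : val (path_end a p) = path_end (val a) (map val p).
Proof.
  revert a. induction p as [|b p IH]; intros a; [reflexivity|].
  simpl map. rewrite !path_end_cons. apply IH.
Qed.

Lemma is_path_lift a l : is_path E (val a) l ->
  exists p, map val p = l /\ is_path restrict_rel a p.
Proof.
  revert a. induction l as [|y l IH]; intros a Hl; [now exists []|].
  destruct Hl as [Hay Hl].
  destruct (IH (exist U y (E_U _ _ Hay (proj2_sig a))) Hl) as [p [Hp Hp']].
  exists (exist U y (E_U _ _ Hay (proj2_sig a)) :: p). simpl. now rewrite Hp.
Qed.

Lemma walk_restrict a b n : walk E (val a) (val b) n <-> walk restrict_rel a b n.
Proof.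
  split.
  - intros [l [<- [Hl He]]]. destruct (is_path_lift a l Hl) as [p [<- Hp]].
    exists p. rewrite length_map. repeat split; auto.
    destruct (path_end a p) as [y Hy] eqn:Hpe, b as [z Hz].
    apply subset_eq_compat. simpl in He. now rewrite <- He, <- path_end_restrict, Hpe.
  - intros [p [<- [Hp <-]]]. exists (map val p). rewrite length_map, path_end_restrict.
    repeat split; auto. now apply is_path_restrict.
Qed.

Lemma dist_le_restrict a b n : dist_le E (val a) (val b) n -> dist_le restrict_rel a b n.
Proof. intros [k [Hk W]]. exists k. split; auto. now apply walk_restrict. Qed.

Lemma geodesic_restrict a p : geodesic restrict_rel a p -> geodesic E (val a) (map val p).
Proof.
  intros [Hp Hg]. split; [now apply is_path_restrict|].
  intros n W. rewrite length_map. apply Hg, walk_restrict.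
  now rewrite path_end_restrict.
Qed.

Lemma in_path_restrict a p v : In v (val a :: map val p) -> exists u, val u = v /\ In u (a :: p).
Proof. intros H. apply (in_map_iff val (a :: p)). exact H. Qed.

Lemma in_out_ball_restrict d a p v :
  in_out_ball E d (val a) (map val p) (val v) -> in_out_ball restrict_rel d a p v.
Proof.
  intros [s [Hs Hd]]. destruct (in_path_restrict a p s Hs) as [u [<- Hu]].
  exists u. split; auto. now apply dist_le_restrict.
Qed.

Lemma in_in_ball_restrict d a p v :
  in_in_ball E d (val a) (map val p) (val v) -> in_in_ball restrict_rel d a p v.
Proof.
  intros [s [Hs Hd]]. destruct (in_path_restrict a p s Hs) as [u [<- Hu]].
  exists u. split; auto. now apply dist_le_restrict.
Qed.

Lemma restrict_thin d :
  (forall x l1 y l2 z l3, U x -> geodesic_triangle E x l1 y l2 z l3 ->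
     thin_triangle E d x l1 y l2 z l3) ->
  strongly_hyperbolic_graph_delta restrict_rel d.
Proof.
  intros Hthin xp p xq q xr r [Gp [Gq [Gr [Hpe [Hxr Hre]]]]].
  assert (Htri : geodesic_triangle E (val xp) (map val p) (val xq) (map val q)
                   (val xr) (map val r)).
  { repeat split; try apply geodesic_restrict; auto; rewrite <- ?path_end_restrict; congruence. }
  destruct (Hthin _ _ _ _ _ _ (proj2_sig xp) Htri) as [T1 [T2 T3]].
  split; [|split]; intros v Hv;
    [destruct (T1 (val v) (in_map val _ _ Hv)) as [Hb|Hb]
    |destruct (T2 (val v) (in_map val _ _ Hv)) as [Hb|Hb]
    |destruct (T3 (val v) (in_map val _ _ Hv)) as [Hb|Hb]];
    solve [left; now apply in_out_ball_restrict | right; now apply in_in_ball_restrict].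
Qed.

End Restriction.

Section Monoid.
Variables (M : Type) (mul : M -> M -> M) (one : M).
Notation U := (is_unit mul one).

Definition unit_edge (S : list M) (x y : M) : Prop := exists s, In s S /\ mul x s = y.

Lemma unit_generators (A : list M) : exists S, (forall s, In s S -> U s) /\
  (forall s, In s S -> exists t, In t S /\ mul s t = one /\ mul t s = one) /\
  (forall a, In a A -> U a -> In a S).
Proof.
  induction A as [|a A [S [HSu [HSinv HAS]]]].
  - exists []. repeat split; intros ? [].
  - destruct (classic (U a)) as [[b [Hab Hba]]|Ha].
    + exists (a :: b :: S). repeat split.
      * intros s [<-|[<-|Hs]]; [exists b|exists a|]; auto.
      * intros s [<-|[<-|Hs]]; [exists b; simpl|exists a; simpl|]; auto.
        destruct (HSinv s Hs) as [t [Ht Hst]]. exists t. simpl. auto.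
      * intros a' [<-|Ha'] Hu; simpl; auto.
    + exists S. repeat split; auto. intros a' [<-|Ha'] Hu; [contradiction|auto].
Qed.

Hypothesis Hmon : is_monoid mul one.

Lemma mul_assoc x y z : mul x (mul y z) = mul (mul x y) z.
Proof. apply Hmon. Qed.

Lemma mul_1_l x : mul one x = x.
Proof. apply Hmon. Qed.

Lemma mul_1_r x : mul x one = x.
Proof. apply Hmon. Qed.

Lemma unit_mul a b : U a -> U b -> U (mul a b).
Proof.
  intros [a' [Ha1 Ha2]] [b' [Hb1 Hb2]]. exists (mul b' a'). split.
  - rewrite <- mul_assoc, (mul_assoc b b' a'), Hb1, mul_1_l. auto.
  - rewrite <- mul_assoc, (mul_assoc a' a b), Ha2, mul_1_l. auto.
Qed.

Fixpoint word_path (x : M) (w : list M) : list M :=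
  match w with [] => [] | a :: w' => mul x a :: word_path (mul x a) w' end.

Lemma word_path_spec (A : list M) x w : (forall b, In b w -> In b A) ->
  is_path (cayley_edge mul A) x (word_path x w) /\
  path_end x (word_path x w) = mul x (word_prod mul one w) /\
  length (word_path x w) = length w.
Proof.
  revert x. induction w as [|a w IH]; intros x Hw; simpl.
  - rewrite mul_1_r. auto.
  - destruct (IH (mul x a) (fun b Hb => Hw b (or_intror Hb))) as [H1 [H2 H3]].
    split; [split; [exists a; split; [apply Hw; now left|reflexivity]|exact H1]|].
    split; [|now rewrite H3].
    rewrite path_end_cons, H2, mul_assoc. reflexivity.
Qed.

Hypothesis Hcan : cancellative mul.

Lemma unit_of_right_inverse x y : mul x y = one -> U x /\ U y.
Proof.
  intros H. assert (H' : mul y x = one).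
  { apply (proj1 Hcan x). rewrite mul_assoc, H, mul_1_l, mul_1_r. auto. }
  split; [exists y|exists x]; auto.
Qed.

Lemma unit_mul_inv a b : U (mul a b) -> U a /\ U b.
Proof.
  intros [w [H1 H2]]. split.
  - apply (unit_of_right_inverse a (mul b w)). rewrite mul_assoc. auto.
  - apply (unit_of_right_inverse (mul w a) b). rewrite <- mul_assoc. auto.
Qed.

Lemma word_prod_unit l : U (word_prod mul one l) -> forall a, In a l -> U a.
Proof.
  induction l as [|b l IH]; simpl; intros H a Ha; [destruct Ha|].
  apply unit_mul_inv in H as [Hb Hl]. destruct Ha as [<-|Ha]; auto.
Qed.

Section UnitGenerators.
Variables (A S : list M).
Hypothesis S_units : forall s, In s S -> U s.
Hypothesis S_inv : forall s, In s S -> exists t, In t S /\ mul s t = one /\ mul t s = one.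
Hypothesis A_units_in_S : forall a, In a A -> U a -> In a S.

Lemma cayley_edge_unit_edge x y : cayley_edge mul A x y -> U y -> unit_edge S x y /\ U x.
Proof.
  intros [a [Ha <-]] Hy. apply unit_mul_inv in Hy as [Hx Hau].
  split; auto. exists a. auto.
Qed.

Lemma unit_edge_unit x y : unit_edge S x y -> U x -> U y.
Proof. intros [s [Hs <-]] Hx. apply unit_mul; auto. Qed.

Lemma unit_edge_sym x y : unit_edge S x y -> unit_edge S y x.
Proof.
  intros [s [Hs <-]]. destruct (S_inv s Hs) as [t [Ht [Hst _]]].
  exists t. split; auto. rewrite <- mul_assoc, Hst, mul_1_r. auto.
Qed.

Lemma unit_edge_cayley_path K :
  (forall s, In s S -> exists w, ((forall b, In b w -> In b A) /\ word_prod mul one w = s) /\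
                                 length w <= K) ->
  forall x y, unit_edge S x y ->
  exists c, is_path (cayley_edge mul A) x c /\ path_end x c = y /\ length c <= K.
Proof.
  intros HK x y [s [Hs <-]]. destruct (HK s Hs) as [w [[Hw <-] Hl]].
  destruct (word_path_spec A x w Hw) as [Hp [He Hlen]].
  exists (word_path x w). repeat split; auto. lia.
Qed.

Lemma units_generated : generates mul one A ->
  forall u : units mul one,
    exists l, (forall a, In a l -> In a S) /\ proj1_sig u = word_prod mul one l.
Proof.
  intros Hgen [u Hu]. destruct (Hgen u) as [l [Hl ->]].
  exists l. split; auto. intros a Ha. apply A_units_in_S; auto.
  exact (word_prod_unit l Hu a Ha).
Qed.

End UnitGenerators.
End Monoid.

Theorem corollary4p10 (M : Type) (mul : M -> M -> M) (one : M) :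
  is_monoid mul one ->
  cancellative mul ->
  strongly_hyperbolic_monoid mul one ->
  units_word_hyperbolic mul one.
Proof.
  intros Hmon Hcan [A [Hgen [d Hthin]]].
  destruct (unit_generators _ mul one A) as [B [HBu [HBinv HAB]]].
  destruct (list_bounded_witness
              (fun s w => (forall b, In b w -> In b A) /\ word_prod mul one w = s) B)
    as [K HK].
  { intros s _. destruct (Hgen s) as [w [Hw ->]]. eauto. }
  assert (HBA : forall x y, unit_edge _ mul B x y -> is_unit mul one x ->
    exists c, is_path (cayley_edge mul A) x c /\ path_end x c = y /\ length c <= K + 1).
  { intros x y Hxy _. destruct (unit_edge_cayley_path _ mul one Hmon A B K HK x y Hxy)
      as [c [Hc [He Hl]]].
    exists c. repeat split; auto. lia. }
  destruct (ES_triangles_thin M (cayley_edge mul A) (unit_edge _ mul B) (is_unit mul one) d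
              (K + 1) Hthin (cayley_edge_unit_edge _ mul one Hmon Hcan A B HAB)
              (unit_edge_unit _ mul one Hmon B HBu)
              (unit_edge_sym _ mul one Hmon B HBinv) ltac:(lia) HBA)
    as [d' Hd'].
  exists B. repeat split; auto.
  - exact (units_generated _ mul one Hmon Hcan A B HAB Hgen).
  - exists d'. exact (restrict_thin _ _ _ (unit_edge_unit _ mul one Hmon B HBu) d' Hd').
Qed.
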